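(* Let $a,b$ be distinct assertion variables. The implication $$(1\hookrightarrow\_)\wedge(a*b)\ \Rightarrow\ \big((1\hookrightarrow\_)*a\big)\vee\big((1\hookrightarrow\_)*b\big)$$ holds in the unary interpretation (for every $\eta$ and every $\rho:\mathsf{AVar}\to\mathsf{IRel}_1$, the meaning of the left side is contained in that of the right side), but fails in the binary interpretation: with $\rho(a)=\{([1],[])\}^\uparrow$ and $\rho(b)=\{([],[1])\}^\uparrow$, the pair $([1],[1])$ belongs to the binary meaning of the left side while both disjuncts on the right have empty binary meaning.
   Context: $\mathsf{Heap}$: finite partial functions $\mathsf{PosInt}\to\mathsf{Int}$; $[]$ the empty heap; $[m]$ the heap storing $0$ at location $m$ and nothing else; $g\sqsubseteq h$ means $h$ extends $g$; $h\cdot g$ union of disjoint heaps; componentwise on $\mathsf{Heap}^n$; $S^\uparrow$ is the upward closure of a set $S$ of tuples. $\mathsf{IRel}_n$: upward closed subsets of $\mathsf{Heap}^n$; $p*q=\{\mathbf f\cdot\mathbf g\mid\mathbf f\in p,\mathbf g\in q,\text{componentwise disjoint}\}$; $\Delta_n(X)=\{(h_1,\dots,h_n)\mid\exists f\in X.\ \forall k.\ f\sqsubseteq h_k\}$ for $X\subseteq\mathsf{Heap}$. Assertion semantics with $\eta$ (ordinary variables to integers) and $\rho:\mathsf{AVar}\to\mathsf{IRel}_n$: primitive assertions $P$ mean $\Delta_n$ of their standard set of heaps, variables $a$ mean $\rho(a)$, $\wedge,\vee,*$ mean $\cap,\cup,*$, $\exists$ means union over integer values. $1\hookrightarrow\_$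 abbreviates $\exists y.\,1\hookrightarrow y$, whose standard set of heaps is $\{h\mid 1\in\operatorname{dom}(h)\}$. Binary: $n=2$; unary: $n=1$. *)

From Stdlib Require Import ZArith PArith Arith Lia.
From Stdlib Require Fin.

Record Heap : Type := MkHeap {
  hfun : positive -> option Z;
  hfin : exists N : positive, forall p, (N < p)%positive -> hfun p = None }.

Definition hsub (g h : Heap) : Prop :=
  forall l v, hfun g l = Some v -> hfun h l = Some v.

Definition hdisj (f g : Heap) : Prop :=
  forall l, hfun f l = None \/ hfun g l = None.

Definition hunion (h f g : Heap) : Prop :=
  hdisj f g /\
  forall l, hfun h l = match hfun f l with Some v => Some v | None => hfun g l end.

Lemma hempty_fin : exists N : positive, forall p, (N < p)%positive ->
  (fun _ : positive => @None Z) p = None.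
Proof. exists 1%positive; reflexivity. Qed.

Definition hempty : Heap := MkHeap (fun _ => None) hempty_fin.

Lemma hsing_fin (m : positive) : exists N : positive, forall p, (N < p)%positive ->
  (fun l => if Pos.eqb l m then Some 0%Z else None) p = None.
Proof.
  exists m; intros p Hp; simpl.
  destruct (Pos.eqb p m) eqn:E; [apply Pos.eqb_eq in E; subst; lia | reflexivity].
Qed.

(** [m] : the heap storing 0 at location m and nothing else *)
Definition hsing (m : positive) : Heap :=
  MkHeap (fun l => if Pos.eqb l m then Some 0%Z else None) (hsing_fin m).

Definition HT (n : nat) := Fin.t n -> Heap.
Definition HRel (n : nat) := HT n -> Prop.

Definition upclosed {n} (p : HRel n) : Prop :=
  forall f h, p f -> (forall k, hsub (f k) (h k)) -> p h.

Definition upcl {n} (S : HRel n) : HRel n :=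
  fun h => exists f, S f /\ forall k, hsub (f k) (h k).

Definition hstar {n} (p q : HRel n) : HRel n :=
  fun t => exists f g, p f /\ q g /\ forall k, hunion (t k) (f k) (g k).

Definition Delta (n : nat) (X : Heap -> Prop) : HRel n :=
  fun t => exists f, X f /\ forall k, hsub f (t k).

(** A primitive assertion is given by its standard set of heaps, which may
    depend on the valuation eta of ordinary variables. *)
Definition Var := nat.
Definition AVar := nat.

Inductive assn : Type :=
| APrim : ((Var -> Z) -> Heap -> Prop) -> assn
| AV : AVar -> assn
| AAnd : assn -> assn -> assn
| AOr : assn -> assn -> assn
| AStar : assn -> assn -> assn
| AEx : Var -> assn -> assn.

Definition upd (eta : Var -> Z) (x : Var) (v : Z) : Var -> Z :=
  fun y => if Nat.eqb y x then v else eta y.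

Fixpoint sem (n : nat) (eta : Var -> Z) (rho : AVar -> HRel n) (A : assn) : HRel n :=
  match A with
  | APrim P => Delta n (P eta)
  | AV a => rho a
  | AAnd A B => fun t => sem n eta rho A t /\ sem n eta rho B t
  | AOr A B => fun t => sem n eta rho A t \/ sem n eta rho B t
  | AStar A B => hstar (sem n eta rho A) (sem n eta rho B)
  | AEx x A => fun t => exists v : Z, sem n (upd eta x v) rho A t
  end.

Definition pts1 (y : Var) : assn :=
  APrim (fun eta h => hfun h 1%positive = Some (eta y)).

Definition pts1_ : assn := AEx 0 (pts1 0).

Definition pair2 (h1 h2 : Heap) : HT 2 :=
  fun k => if Nat.eqb (proj1_sig (Fin.to_nat k)) 0 then h1 else h2.
Definition single1 (h : Heap) : HT 1 := fun _ => h.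

Definition LHS (a b : AVar) : assn := AAnd pts1_ (AStar (AV a) (AV b)).
Definition RHS1 (a : AVar) : assn := AStar pts1_ (AV a).
Definition RHS (a b : AVar) : assn := AOr (RHS1 a) (RHS1 b).

(** The meaning of [1 ↪ _] on an n-tuple of heaps is the set of tuples all of
    whose components allocate location 1 (with a common value).

    Unary case: a single heap [t] allocating 1 is split as [f · g] with [f]
    satisfying [a] and [g] satisfying [b]; location 1 lies in [f] or in [g],
    and that piece alone witnesses [1 ↪ _].  Hence [t] satisfies
    [(1 ↪ _) * a] or [(1 ↪ _) * b] (after commuting the star).

    Binary case: [(1 ↪ _) * c] can only hold on tuples whose [c]-part leaves
    location 1 free in every component.  Every tuple in
    [{([1],[])}^↑] owns location 1 in its first component, every tuple in
    [{([],[1])}^↑] in its second, so both disjuncts are empty; meanwhile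
    [([1],[1])] splits as [([1],[]) · ([],[1])] and allocates 1 in both runs. *)

From Stdlib Require Import ZArith PArith.

Lemma fin1_unique (k : Fin.t 1) : k = Fin.F1.
Proof.
  refine (Fin.caseS' k (fun k => k = Fin.F1) eq_refl _).
  intro p; apply (Fin.case0 (fun p => Fin.FS p = Fin.F1) p).
Qed.

Lemma hsub_refl (h : Heap) : hsub h h.
Proof. intros l v H; exact H. Qed.

Lemma hunion_comm (h f g : Heap) : hunion h f g -> hunion h g f.
Proof.
  intros [Hd Hu]; split.
  - intro l; destruct (Hd l); auto.
  - intro l; rewrite Hu; destruct (Hd l) as [E|E]; rewrite E;
      destruct (hfun g l), (hfun f l); congruence.
Qed.

Lemma hunion_loc (h f g : Heap) (l : positive) (v : Z) :
  hunion h f g -> hfun h l = Some v ->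
  (exists w, hfun f l = Some w) \/ hfun g l = Some v.
Proof.
  intros [_ Hu] Hh; rewrite Hu in Hh.
  destruct (hfun f l) as [w|]; [left; exists w; reflexivity | right; exact Hh].
Qed.

Lemma hunion_sing_empty (m : positive) : hunion (hsing m) (hsing m) hempty.
Proof.
  split; [intro l; right; reflexivity|].
  intro l; simpl; destruct (Pos.eqb l m); reflexivity.
Qed.

Lemma hunion_empty_sing (m : positive) : hunion (hsing m) hempty (hsing m).
Proof. split; [intro l; left; reflexivity | intro l; reflexivity]. Qed.

Lemma hstar_comm {n} (p q : HRel n) (t : HT n) : hstar p q t -> hstar q p t.
Proof.
  intros [f [g [Hp [Hq Hu]]]].
  exists g, f; split; [exact Hq | split; [exact Hp |]].
  intro k; apply hunion_comm, Hu.
Qed.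

Lemma pair2_hunion (h1 h2 f1 f2 g1 g2 : Heap) :
  hunion h1 f1 g1 -> hunion h2 f2 g2 ->
  forall i, hunion (pair2 h1 h2 i) (pair2 f1 f2 i) (pair2 g1 g2 i).
Proof. intros H1 H2 i; unfold pair2; destruct (Nat.eqb _ _); assumption. Qed.

Lemma upcl_incl {n} (S : HRel n) (s : HT n) : S s -> upcl S s.
Proof. intro Hs; exists s; split; [exact Hs | intro k; apply hsub_refl]. Qed.

Lemma upcl_single_alloc {n} (u g : HT n) (k : Fin.t n) (l : positive) (v : Z) :
  upcl (fun s => s = u) g -> hfun (u k) l = Some v -> hfun (g k) l = Some v.
Proof. intros [s [-> Hs]] Hu; exact (Hs k l v Hu). Qed.

Lemma pts1__alloc {n} (eta : Var -> Z) (rho : AVar -> HRel n) (t : HT n) :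
  sem n eta rho pts1_ t -> exists v, forall k, hfun (t k) 1%positive = Some v.
Proof.
  intros [v [f [Hf Hsub]]]; exists v; intro k; exact (Hsub k _ _ Hf).
Qed.

Lemma pts1__unary (eta : Var -> Z) (rho : AVar -> HRel 1) (t : HT 1) (v : Z) :
  hfun (t Fin.F1) 1%positive = Some v -> sem 1 eta rho pts1_ t.
Proof.
  intro Ht; exists v, (t Fin.F1); split; [exact Ht|].
  intro k; rewrite (fin1_unique k); apply hsub_refl.
Qed.

Lemma pts1__sing {n} (eta : Var -> Z) (rho : AVar -> HRel n) (t : HT n) :
  (forall k, t k = hsing 1) -> sem n eta rho pts1_ t.
Proof.
  intro Ht; exists 0%Z, (hsing 1); split; [reflexivity|].
  intro k; rewrite Ht; apply hsub_refl.
Qed.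

(** [(1 ↪ _) * q] is empty when every tuple of [q] allocates location 1 in
    some fixed component: location 1 cannot be owned by both sides. *)
Lemma pts1__star_empty {n} (eta : Var -> Z) (rho : AVar -> HRel n)
    (q : HRel n) (k : Fin.t n) :
  (forall g, q g -> hfun (g k) 1%positive = Some 0%Z) ->
  forall t, ~ hstar (sem n eta rho pts1_) q t.
Proof.
  intros Hq t [f [g [Hf [Hg Hu]]]].
  destruct (pts1__alloc eta rho f Hf) as [v Hv].
  destruct (Hu k) as [Hd _]; destruct (Hd 1%positive) as [E|E].
  - rewrite Hv in E; discriminate.
  - rewrite (Hq g Hg) in E; discriminate.
Qed.

Lemma unary_distribution (a b : AVar) (eta : Var -> Z) (rho : AVar -> HRel 1)
    (t : HT 1) :
  sem 1 eta rho (LHS a b) t -> sem 1 eta rho (RHS a b) t.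
Proof.
  intros [Hpts [f [g [Ha [Hb Hu]]]]].
  destruct (pts1__alloc eta rho t Hpts) as [v Hv].
  destruct (hunion_loc _ _ _ _ _ (Hu Fin.F1) (Hv Fin.F1)) as [[w Hf] | Hg].
  -
    right; exists f, g; split; [exact (pts1__unary eta rho f w Hf) |].
    split; [exact Hb | exact Hu].
  -
    left; apply hstar_comm; exists f, g; split; [exact Ha |].
    split; [exact (pts1__unary eta rho g v Hg) | exact Hu].
Qed.

Section BinaryCounterexample.

Variables (a b : AVar) (eta : Var -> Z) (rho : AVar -> HRel 2).
Hypothesis rho_a : forall t, rho a t <-> upcl (fun s => s = pair2 (hsing 1) hempty) t.
Hypothesis rho_b : forall t, rho b t <-> upcl (fun s => s = pair2 hempty (hsing 1)) t.

Lemma binary_LHS : sem 2 eta rho (LHS a b) (pair2 (hsing 1) (hsing 1)).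
Proof.
  split.
  - apply pts1__sing; intro k; unfold pair2; destruct (Nat.eqb _ _); reflexivity.
  - exists (pair2 (hsing 1) hempty), (pair2 hempty (hsing 1)).
    split; [|split].
    + apply rho_a, upcl_incl; reflexivity.
    + apply rho_b, upcl_incl; reflexivity.
    + apply pair2_hunion; [apply hunion_sing_empty | apply hunion_empty_sing].
Qed.

(** Every tuple of [ρ(a)] owns location 1 in its first run. *)
Lemma binary_RHS1_a_empty : forall t, ~ sem 2 eta rho (RHS1 a) t.
Proof.
  apply (pts1__star_empty eta rho (rho a) Fin.F1).
  intros g Hg; apply rho_a in Hg.
  exact (upcl_single_alloc _ _ Fin.F1 1%positive 0%Z Hg eq_refl).
Qed.

(** Every tuple of [ρ(b)] owns location 1 in its second run. *)
Lemma binary_RHS1_b_empty : forall t, ~ sem 2 eta rho (RHS1 b) t.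
Proof.
  apply (pts1__star_empty eta rho (rho b) (Fin.FS Fin.F1)).
  intros g Hg; apply rho_b in Hg.
  exact (upcl_single_alloc _ _ (Fin.FS Fin.F1) 1%positive 0%Z Hg eq_refl).
Qed.

End BinaryCounterexample.

Theorem mainTheorem16 (a b : AVar) (hab : a <> b) :
  (* unary interpretation: the implication holds *)
  (forall (eta : Var -> Z) (rho : AVar -> HRel 1),
      (forall c, upclosed (rho c)) ->
      forall t, sem 1 eta rho (LHS a b) t -> sem 1 eta rho (RHS a b) t)
  /\
  (* binary interpretation: the counterexample *)
  (forall (eta : Var -> Z) (rho : AVar -> HRel 2),
      (forall c, upclosed (rho c)) ->
      (forall t, rho a t <-> upcl (fun s => s = pair2 (hsing 1) hempty) t) ->
      (forall t, rho b t <-> upcl (fun s => s = pair2 hempty (hsing 1)) t) ->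
      sem 2 eta rho (LHS a b) (pair2 (hsing 1) (hsing 1))
      /\ (forall t, ~ sem 2 eta rho (RHS1 a) t)
      /\ (forall t, ~ sem 2 eta rho (RHS1 b) t)).
Proof.
  split.
  - intros eta rho _; apply unary_distribution.
  - intros eta rho _ Ha Hb; split; [|split].
    + exact (binary_LHS a b eta rho Ha Hb).
    + exact (binary_RHS1_a_empty a eta rho Ha).
    + exact (binary_RHS1_b_empty b eta rho Hb).
Qed.
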